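(* Let $A\in P(n)$ and let $N$ be a unitarily invariant norm on $M_n$. Then $I(N,A)=0$ if and only if $A_{ii}=0$ for some $i\in\{1,\dots,n\}$.
   Context: $M_n$ is the set of complex $n\times n$ matrices, $P(n)$ the positive semidefinite ones, $\circ$ the Hadamard product. For a unitarily invariant norm $N$, $I(N,A)=\min\{N(A\circ B): B\in P(n),\ N(B)=1\}$. *)

From HB Require Import structures.
From mathcomp Require Import all_boot all_order all_algebra.
From mathcomp Require Import complex.
From mathcomp Require Import boolp classical_sets reals.
Set Implicit Arguments. Unset Strict Implicit. Unset Printing Implicit Defensive.
Import Order.TTheory GRing.Theory Num.Theory.
Local Open Scope ring_scope.

Definition ctmx (R : realType) (m n : nat) (A : 'M[R[i]]_(m, n)) : 'M[R[i]]_(n, m) :=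
  map_mx (@conjc R) A^T.

Definition hadamard (R : realType) (n : nat) (A B : 'M[R[i]]_n) : 'M[R[i]]_n :=
  \matrix_(i, j) (A i j * B i j).

Definition psd (R : realType) (n : nat) (A : 'M[R[i]]_n) : Prop :=
  ctmx A = A /\ forall x : 'cV[R[i]]_n, 0 <= (ctmx x *m A *m x) 0 0.

Definition unitary (R : realType) (n : nat) (U : 'M[R[i]]_n) : Prop :=
  U *m ctmx U = 1%:M.

Definition is_norm (R : realType) (n : nat) (N : 'M[R[i]]_n -> R) : Prop :=
  [/\ forall A, 0 <= N A,
      forall A, N A = 0 -> A = 0,
      forall (c : R[i]) A, N (c *: A) = @complex.Re R `|c| * N A &
      forall A B, N (A + B) <= N A + N B].

Definition unitarily_invariant_norm (R : realType) (n : nat)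
    (N : 'M[R[i]]_n -> R) : Prop :=
  is_norm N /\
  forall U V A, unitary U -> unitary V -> N (U *m A *m V) = N A.

(* I(N,A) = min { N(A o B) : B in P(n), N(B) = 1 }, taken as the infimum
   (the minimum is attained, so this coincides with the paper's min). *)
Definition I_N (R : realType) (n : nat) (N : 'M[R[i]]_n -> R) (A : 'M[R[i]]_n) : R :=
  inf [set N (hadamard A B) | B in [set B | psd B /\ N B = 1]]%classic.

From HB Require Import structures.
From mathcomp Require Import all_boot all_order all_algebra.
From mathcomp Require Import complex.
From mathcomp Require Import boolp classical_sets reals.
From mathcomp Require Import ring lra.
Set Implicit Arguments. Unset Strict Implicit. Unset Printing Implicit Defensive.
Import Order.TTheory GRing.Theory Num.Theory.
Local Open Scope ring_scope.

(* If A_ii = 0, the positive semidefinite matrix E_ii / N(E_ii) has norm 1 and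
   its Hadamard product with A vanishes, so I(N, A) = 0.  Conversely, let every
   A_ii be positive.  Unitary invariance gives N(X) >= |X_ii| N(E_ii), hence
   B_ii <= N(A o B) / (A_ii N(E_ii)) for positive semidefinite B.  On the other
   hand |Re B_jk| + |Im B_jk| <= B_jj + B_kk, so the triangle inequality bounds
   N(B) by a multiple of the trace of B.  Together, N(A o B) is bounded below
   by a positive constant whenever N(B) = 1. *)

Lemma sum_ord_gt0 (F : numDomainType) n (f : 'I_n -> F) :
  (0 < n)%N -> (forall i, 0 < f i) -> 0 < \sum_i f i.
Proof.
move=> n_gt0 f_gt0; pose i0 := Ordinal n_gt0.
apply: lt_le_trans (f_gt0 i0) _; rewrite (bigD1 i0) //= lerDl.
by apply: sumr_ge0 => i _; exact: ltW.
Qed.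

Lemma Re_normc_real (R : rcfType) (r : R) : complex.Re `|r%:C%C| = `|r|.
Proof. by rewrite normc_def /= expr0n /= addr0 sqrtr_sqr. Qed.

Lemma Re_normc_i (R : rcfType) : complex.Re `|'i%C : R[i]| = 1.
Proof. by rewrite normc_def /= expr0n /= add0r expr1n sqrtr1. Qed.

Lemma ger0_complexE (R : rcfType) (x : R[i]) : 0 <= x -> x = (complex.Re x)%:C%C.
Proof. by move=> /ger0_real /RRe_real. Qed.

Lemma delta_mx_compress (F : comPzSemiRingType) n (i : 'I_n) (X : 'M[F]_n) :
  delta_mx i i *m X *m delta_mx i i = X i i *: delta_mx i i.
Proof.
rewrite {1}(matrix_sum_delta X) pair_bigA /= (mulmx_sumr (delta_mx i i)) mulmx_suml.
rewrite (bigD1 (i, i)) //= big1 ?addr0 => [|[j k] /= jk].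
  by rewrite -scalemxAr -scalemxAl !mul_delta_mx.
rewrite -scalemxAr -scalemxAl.
case: (eqVneq i j) => [ij|ij]; last by rewrite mul_delta_mx_0 // mul0mx scaler0.
by rewrite -ij mul_delta_mx mul_delta_mx_0 ?scaler0 //; apply: contraNneq jk => ->; rewrite ij.
Qed.

Lemma delta_mx_form (F : pzSemiRingType) n (j k : 'I_n) (B : 'M[F]_n) :
  (delta_mx 0 j : 'rV_n) *m B *m (delta_mx k 0 : 'cV_n) = (B j k)%:M.
Proof. by rewrite -rowE -colE [LHS]mx11_scalar !mxE. Qed.

Section PositiveSemidefinite.
Variables (R : realType) (n : nat).
Implicit Types (B : 'M[R[i]]_n) (j k : 'I_n).

Lemma psd_herm B j k : psd B -> B k j = (B j k)^*%C.
Proof. by case=> + _ => /matrixP ctB; rewrite -[LHS]ctB !mxE. Qed.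

Lemma psd_form2 B j k (c : R[i]) : psd B ->
  0 <= B j j + c * B j k + c^*%C * B k j + c^*%C * c * B k k.
Proof.
pose x : 'cV_n := delta_mx j 0 + c *: delta_mx k 0.
case=> _ /(_ x).
have -> : ctmx x = delta_mx 0 j + c^*%C *: delta_mx 0 k.
  by apply/matrixP => a b; rewrite !mxE rmorphD rmorphM !rmorph_nat ![(a == 0) && _]andbC.
rewrite /x !(mulmxDl, mulmxDr) -!scalemxAl -!scalemxAr !delta_mx_form !mxE /=.
by rewrite !mulr1n mulrA !addrA (addrAC (B j j)).
Qed.

Lemma psd_diag_ge0 B j : psd B -> 0 <= B j j.
Proof. by move=> /(psd_form2 j j 0); rewrite conjc0 !mul0r !addr0. Qed.

Lemma psd_Re_diag_ge0 B j : psd B -> 0 <= complex.Re (B j j).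
Proof. by move=> /(psd_diag_ge0 j); rewrite lecE => /andP[]. Qed.

Lemma psd_offdiag_le B j k : psd B ->
  `|complex.Re (B j k)| + `|complex.Im (B j k)|
    <= complex.Re (B j j) + complex.Re (B k k).
Proof.
move=> psdB.
have := psd_form2 j k 1 psdB; have := psd_form2 j k (-1) psdB.
have := psd_form2 j k 'i%C psdB; have := psd_form2 j k (- 'i%C) psdB.
have := psd_diag_ge0 j psdB; have := psd_diag_ge0 k psdB.
rewrite (psd_herm j k psdB).
case: (B j j) => p q; case: (B k k) => r s; case: (B j k) => a b /=; simpc.
move=> /andP[_ h1] /andP[_ h2] /andP[_ h3] /andP[_ h4] /andP[_ h5] /andP[_ h6].
by case: (lerP 0 a) => ha; [rewrite (ger0_norm ha) | rewrite (ltr0_norm ha)];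
  case: (lerP 0 b) => hb; [rewrite (ger0_norm hb) | rewrite (ltr0_norm hb)
                         | rewrite (ger0_norm hb) | rewrite (ltr0_norm hb)]; lra.
Qed.

Lemma psd_scale_delta (r : R) (i : 'I_n) : 0 <= r -> psd (r%:C%C *: delta_mx i i).
Proof.
move=> r_ge0; split.
  apply/matrixP => a b; rewrite !mxE (andbC (b == i)).
  by case: (_ && _); rewrite ?mulr0 ?mulr1 ?conjc0 ?conjc_real.
move=> x; rewrite -scalemxAr -scalemxAl mxE.
rewrite -(mul_delta_mx (0 : 'I_1)) mulmxA -colE -mulmxA -rowE mxE big_ord1 !mxE.
by rewrite mulr_ge0 ?ler0c // mulrC mulcJ_ge0.
Qed.

End PositiveSemidefinite.

Lemma unitary1 (R : realType) n : unitary (1%:M : 'M[R[i]]_n).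
Proof.
rewrite /unitary mul1mx.
by apply/matrixP => a b; rewrite !mxE conjc_nat eq_sym.
Qed.

Lemma unitary_reflection (R : realType) n (i : 'I_n) :
  unitary (2%:R *: delta_mx i i - 1%:M : 'M[R[i]]_n).
Proof.
set T := 2%:R *: delta_mx i i - 1%:M.
have ctT : ctmx T = T.
  apply/matrixP => a b; rewrite !mxE.
  by rewrite rmorphB rmorphM !rmorph_nat (andbC (b == i)) (eq_sym b a).
rewrite /unitary ctT /T mulmxBl !mulmxBr !mul1mx mulmx1 -!scalemxAl -!scalemxAr mul_delta_mx.
by apply/matrixP => a b; rewrite !mxE; ring.
Qed.

Section NormFacts.
Variables (R : realType) (n : nat) (N : 'M[R[i]]_n -> R).
Hypothesis normN : is_norm N.

Lemma norm_ge0 X : 0 <= N X.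
Proof. by case: normN. Qed.

Lemma normZ c X : N (c *: X) = complex.Re `|c| * N X.
Proof. by case: normN. Qed.

Lemma normD X Y : N (X + Y) <= N X + N Y.
Proof. by case: normN. Qed.

Lemma norm0 : N 0 = 0.
Proof. by rewrite -(scale0r (0 : 'M[R[i]]_n)) normZ normr0 mul0r. Qed.

Lemma norm_sum (I : Type) (r : seq I) (P : pred I) (F : I -> 'M[R[i]]_n) :
  N (\sum_(i <- r | P i) F i) <= \sum_(i <- r | P i) N (F i).
Proof.
apply: (big_ind2 (fun X y => N X <= y)); first by rewrite norm0.
  by move=> X1 X2 y1 y2 h1 h2; apply: le_trans (normD _ _) (lerD h1 h2).
by [].
Qed.

Lemma normZ_real (r : R) X : N (r%:C%C *: X) = `|r| * N X.
Proof. by rewrite normZ Re_normc_real. Qed.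

Lemma normZ_i X : N ('i%C *: X) = N X.
Proof. by rewrite normZ Re_normc_i mul1r. Qed.

Lemma norm_delta_gt0 j k : 0 < N (delta_mx j k).
Proof.
rewrite lt_def norm_ge0 andbT; apply/eqP.
case: normN => _ N0 _ _ /N0 /matrixP /(_ j k).
by rewrite !mxE !eqxx; apply/eqP; rewrite oner_eq0.
Qed.

Lemma norm_le_entries X : N X <= \sum_j \sum_k
  ((`|complex.Re (X j k)| + `|complex.Im (X j k)|) * N (delta_mx j k)).
Proof.
have decompX : X = \sum_j \sum_k ((complex.Re (X j k))%:C%C *: delta_mx j k
              + (complex.Im (X j k))%:C%C *: ('i%C *: delta_mx j k)).
  rewrite {1}(matrix_sum_delta X); apply: eq_bigr => j _; apply: eq_bigr => k _.
  by rewrite scalerA -scalerDl {1}(complexE (X j k)) mulrC.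
rewrite {1}decompX; apply: le_trans (norm_sum _ _ _) _; apply: ler_sum => j _.
apply: le_trans (norm_sum _ _ _) _; apply: ler_sum => k _.
by apply: le_trans (normD _ _) _; rewrite !normZ_real normZ_i mulrDl.
Qed.

Definition normalized_delta i : 'M[R[i]]_n := ((N (delta_mx i i))^-1)%:C%C *: delta_mx i i.

Lemma normalized_delta_psd i : psd (normalized_delta i).
Proof. by apply: psd_scale_delta; rewrite invr_ge0 norm_ge0. Qed.

Lemma norm_normalized_delta i : N (normalized_delta i) = 1.
Proof.
rewrite normZ_real ger0_norm ?invr_ge0 ?norm_ge0 // mulVf //.
by rewrite gt_eqF // norm_delta_gt0.
Qed.

Lemma psd_norm_le_diag B : psd B ->
  N B <= 2 * (\sum_i complex.Re (B i i)) * \sum_j \sum_k N (delta_mx j k).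
Proof.
move=> psdB; apply: le_trans (norm_le_entries B) _.
rewrite mulr_sumr; apply: ler_sum => j _; rewrite mulr_sumr; apply: ler_sum => k _.
apply: ler_wpM2r; first exact: norm_ge0.
apply: le_trans (psd_offdiag_le j k psdB) _.
have diag_le l : complex.Re (B l l) <= \sum_i complex.Re (B i i).
  by rewrite (bigD1 l) //= lerDl; apply: sumr_ge0 => i _; exact: psd_Re_diag_ge0.
by have := diag_le j; have := diag_le k; lra.
Qed.

End NormFacts.

Lemma norm_diag_entry_le (R : realType) n (N : 'M[R[i]]_n -> R)
    (X : 'M[R[i]]_n) (i : 'I_n) :
  unitarily_invariant_norm N -> complex.Re `|X i i| * N (delta_mx i i) <= N X.
Proof.
case=> normN invN.
set T := 2%:R *: delta_mx i i - 1%:M : 'M[R[i]]_n.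
have invX U V : unitary U -> unitary V -> N (U *m X *m V) = N X by exact: invN.
have uT := unitary_reflection R i; have u1 := unitary1 R n.
(* T is unitary and (T + 1) / 2 = E_ii, so 4 E_ii X E_ii is a sum of four
   unitary transforms of X. *)
have average : (4%:R : R)%:C%C *: (delta_mx i i *m X *m delta_mx i i)
    = (T + 1%:M) *m X *m (T + 1%:M).
  have -> : (4%:R : R)%:C%C = 2%:R * 2%:R :> R[i] by rewrite rmorph_nat -natrM.
  by rewrite -scalerA scalemxAr !scalemxAl /T subrK.
have expand : (T + 1%:M) *m X *m (T + 1%:M)
    = T *m X *m T + T *m X *m 1%:M + (1%:M *m X *m T + 1%:M *m X *m 1%:M).
  by rewrite mulmxDr !mulmxDl addrACA.
have : N ((4%:R : R)%:C%C *: (X i i *: delta_mx i i)) <= 4%:R * N X.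
  rewrite -delta_mx_compress average expand.
  apply: le_trans (normD normN _ _) _.
  apply: le_trans (lerD (normD normN _ _) (normD normN _ _)) _.
  by rewrite !invX //; lra.
by rewrite normZ_real // normZ // ger0_norm // ler_pM2l.
Qed.

Section InfimumOfHadamard.
Variables (R : realType) (n : nat) (N : 'M[R[i]]_n -> R) (A : 'M[R[i]]_n).

Let values := [set N (hadamard A B) | B in [set B | psd B /\ N B = 1]]%classic.

Lemma I_N_eq0 (i : 'I_n) : is_norm N -> A i i = 0 -> I_N N A = 0.
Proof.
move=> normN Aii0.
have values0 : values 0.
  exists (normalized_delta N i); first by split; [exact: normalized_delta_psd | exact: norm_normalized_delta].
  rewrite -(norm0 normN); congr N; apply/matrixP => a b; rewrite !mxE.
  by case: eqP => [->|_]; case: eqP => [->|_]; rewrite ?Aii0 ?mul0r ?mulr0 //= ?mulr0.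
have values_ge0 : lbound values 0 by move=> _ [B _ <-]; exact: norm_ge0.
apply/eqP; rewrite eq_le; apply/andP; split.
  exact: (ge_inf (ex_intro _ 0 values_ge0)).
exact: (lb_le_inf (ex_intro _ 0 values0)).
Qed.

Hypotheses (uinvN : unitarily_invariant_norm N) (psdA : psd A).
Hypothesis diagA_neq0 : forall i, A i i != 0.

Lemma Re_diagA_gt0 i : 0 < complex.Re (A i i).
Proof.
have : 0 < A i i by rewrite lt_def diagA_neq0 psd_diag_ge0.
by rewrite ltcE => /andP[].
Qed.

Lemma psd_diag_le_hadamard B : psd B ->
  \sum_i complex.Re (B i i)
    <= N (hadamard A B) * \sum_i (complex.Re (A i i) * N (delta_mx i i))^-1.
Proof.
move=> psdB; rewrite mulr_sumr; apply: ler_sum => i _.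
rewrite ler_pdivlMr ?mulr_gt0 ?Re_diagA_gt0 ?(norm_delta_gt0 uinvN.1) //.
apply: le_trans (norm_diag_entry_le (hadamard A B) i uinvN).
rewrite mxE (ger0_complexE (psd_diag_ge0 i psdA)) (ger0_complexE (psd_diag_ge0 i psdB)).
rewrite -rmorphM Re_normc_real ger0_norm ?mulr_ge0 ?psd_Re_diag_ge0 //=.
by rewrite mulrA (mulrC (complex.Re (B i i))).
Qed.

Lemma I_N_gt0 : (0 < n)%N -> 0 < I_N N A.
Proof.
move=> n_gt0; have normN := uinvN.1.
set K := \sum_j \sum_k N (delta_mx j k).
set S := \sum_i (complex.Re (A i i) * N (delta_mx i i))^-1.
have K_gt0 : 0 < K.
  by apply: sum_ord_gt0 => // j; apply: sum_ord_gt0 => // k; exact: norm_delta_gt0.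
have S_gt0 : 0 < S.
  apply: sum_ord_gt0 => // i.
  by rewrite invr_gt0 mulr_gt0 ?Re_diagA_gt0 ?norm_delta_gt0.
have values_ge : lbound values (2 * K * S)^-1.
  move=> _ [B [psdB NB1] <-].
  have := psd_norm_le_diag normN psdB; have := psd_diag_le_hadamard psdB.
  rewrite NB1 -/K -/S -[_^-1]mul1r ler_pdivrMr ?mulr_gt0 //.
  have := norm_ge0 normN (hadamard A B); nra.
apply: lt_le_trans (lb_le_inf _ values_ge); first by rewrite invr_gt0 !mulr_gt0.
pose i0 := Ordinal n_gt0.
exists (N (hadamard A (normalized_delta N i0))), (normalized_delta N i0) => //.
by split; [exact: normalized_delta_psd | exact: norm_normalized_delta].
Qed.

End InfimumOfHadamard.

Theorem mainTheorem16 (R : realType) (n : nat) (hn : (0 < n)%N)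
    (N : 'M[R[i]]_n -> R) (A : 'M[R[i]]_n) :
  unitarily_invariant_norm N -> psd A ->
  (I_N N A = 0 <-> exists i : 'I_n, A i i = 0).
Proof.
move=> uinvN psdA; split => [I_N0 | [i Aii0]]; last exact: I_N_eq0 uinvN.1 Aii0.
apply: contrapT => /forallNP diagA_neq0.
have := I_N_gt0 uinvN psdA (fun i => introN eqP (diagA_neq0 i)) hn.
by rewrite I_N0 ltxx.
Qed.
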